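(* Let $\mathcal{G}=(V,E,p)$ be an uncertain graph, $k,l_m,\theta$ positive integers, and $G_1,\dots,G_\theta$ independently sampled possible worlds. Let $V_1,\dots,V_k$ be the true top-$k$ node sets among those of size at least $l_m$ that are closed w.r.t. $\gamma$ (i.e. they are such closed sets with $\gamma(V_1)\ge\dots\ge\gamma(V_k)\ge\gamma(U)$ for every other closed set $U$ with $|U|\ge l_m$). For each $i$, let $\mathbf{G}(V_i)$ be the set of possible worlds $G$ of $\mathcal{G}$ such that $V_i$ is contained in some densest subgraph of $G$, and let $\mathbb{G}=\bigcup_{i=1}^k\mathbf{G}(V_i)$. Then $$\Pr\big(V_1,\dots,V_k\text{ are all closed w.r.t. }\widehat\gamma\big)\ \ge\ 1-\sum_{G\in\mathbb{G}}\big(1-\Pr(G)\big)^\theta.$$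
   Context: An uncertain graph $\mathcal{G}=(V,E,p)$ has finite node set $V$, undirected edge set $E$, and $p:E\to(0,1]$; a possible world $G=(V,E_G)$, $E_G\subseteq E$, has probability $\Pr(G)=\prod_{e\in E_G}p(e)\prod_{e\in E\setminus E_G}(1-p(e))$. Edge density: $\rho(G[W])=|E_G[W]|/|W|$ for nonempty $W\subseteq V$, with $E_G[W]$ the edges of $G$ inside $W$. A densest subgraph of $G$ is a nonempty $W\subseteq V$ maximizing $\rho(G[W])$. The densest subgraph containment probability of $U\subseteq V$ is $\gamma(U)=\sum_G\Pr(G)\cdot\mathbb{1}[\exists\,U'\supseteq U:\ U'\text{ is a densest subgraph of }G]$. Given independent samples $G_1,\dots,G_\theta$ drawn from $\Pr$, $\widehat\gamma(U)=\frac1\theta\#\{i: U\text{ is contained in some densest subgraph of }G_i\}$. A set $U\subseteq V$ is closed w.r.t. a function $f$ on subsets of $V$ if no proper superset $U'\supsetneq U$, $U'\subseteq V$, has $f(U')=f(U)$. *)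

From mathcomp Require Import all_boot all_order all_algebra.
Set Implicit Arguments. Unset Strict Implicit. Unset Printing Implicit Defensive.
Import Order.TTheory GRing.Theory Num.Theory.
Local Open Scope ring_scope.

(* An undirected edge is a 2-element set of nodes.
   An uncertain graph is (E, p) with E : {set {set T}} (every e in E has
   #|e| = 2) and p e in (0,1] for e in E.  A possible world is G \subset E. *)

Section Defs.
Variable R : realFieldType.
Variable T : finType.

Definition world_prob (E : {set {set T}}) (p : {set T} -> R)
    (G : {set {set T}}) : R :=
  (\prod_(e in G) p e) * \prod_(e in E :\: G) (1 - p e).

Definition edges_in (G : {set {set T}}) (W : {set T}) : {set {set T}} :=
  [set e in G | e \subset W].

Definition density (G : {set {set T}}) (W : {set T}) : R :=
  (#|edges_in G W|)%:R / (#|W|)%:R.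

Definition is_densest (G : {set {set T}}) (W : {set T}) : bool :=
  (W != set0) &&
  [forall W' : {set T}, (W' != set0) ==> (density G W' <= density G W)].

Definition in_densest (G : {set {set T}}) (U : {set T}) : bool :=
  [exists U' : {set T}, (U \subset U') && is_densest G U'].

Definition gamma (E : {set {set T}}) (p : {set T} -> R) (U : {set T}) : R :=
  \sum_(G in powerset E) world_prob E p G * (in_densest G U)%:R.

Definition gamma_hat (theta : nat) (S : {ffun 'I_theta -> {set {set T}}})
    (U : {set T}) : R :=
  (#|[set i | in_densest (S i) U]|)%:R / theta%:R.

Definition closed_wrt (f : {set T} -> R) (U : {set T}) : bool :=
  [forall U' : {set T}, (U \proper U') ==> (f U' != f U)].

Definition sample_prob (E : {set {set T}}) (p : {set T} -> R) (theta : nat)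
    (A : {ffun 'I_theta -> {set {set T}}} -> bool) : R :=
  \sum_(S : {ffun 'I_theta -> {set {set T}}} | [forall i, S i \subset E] && A S)
     \prod_(i < theta) world_prob E p (S i).

End Defs.

Definition worlds_containing (R : realFieldType) (T : finType) (E : {set {set T}}) (U : {set T}) :
    {set {set {set T}}} :=
  [set G in powerset E | @in_densest R T G U].

From mathcomp Require Import all_boot all_order all_algebra.
Set Implicit Arguments. Unset Strict Implicit. Unset Printing Implicit Defensive.
Import Order.TTheory GRing.Theory Num.Theory.
Local Open Scope ring_scope.

(* Containment in a densest subgraph is antitone in the node set, so gamma and
   gamma_hat are antitone too.  If V is closed w.r.t. gamma, every proper
   superset U loses some world G in which V lies in a densest subgraph and U
   does not; once every such world occurs among the samples, the same G makes
   gamma_hat U < gamma_hat V, so V is closed w.r.t. gamma_hat.  The probability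
   that some world G of the union is never sampled is at most the sum over G of
   (1 - Pr G)^theta by the union bound. *)

Section WorldProbability.
Variables (R : realFieldType) (T : finType).
Variables (E : {set {set T}}) (p : {set T} -> R).
Hypothesis hp : forall e, e \in E -> 0 <= p e <= 1.

Lemma world_prob_ge0 (G : {set {set T}}) :
  G \subset E -> 0 <= world_prob E p G.
Proof.
move=> sGE; apply: mulr_ge0; apply: prodr_ge0 => e He.
- by case/andP: (hp (subsetP sGE _ He)).
- by move: He; rewrite inE => /andP[_ /hp/andP[_]]; rewrite subr_ge0.
Qed.

(* Expand prod_e (p e + (1 - p e)) over the edges of E. *)
Lemma sum_world_prob : \sum_(G in powerset E) world_prob E p G = 1.
Proof.
pose F e := if e \in E then p e else 0.
pose F' e := if e \in E then 1 - p e else 1.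
have <- : \prod_e (F e + F' e) = 1.
  by rewrite big1 // => e _; rewrite /F /F'; case: ifP; rewrite ?subrKC ?add0r.
rewrite bigA_distr [RHS](bigID (fun G : {set {set T}} => G \subset E)) /=.
rewrite [X in _ = _ + X]big1 ?addr0; last first.
  move=> G /subsetPn[e eG eE].
  by rewrite (bigD1 e) //= eG /F (negbTE eE) mul0r.
apply: eq_big => [G|G]; first by rewrite powersetE.
rewrite powersetE => sGE; rewrite (bigID (mem G)) /=; congr (_ * _).
  by apply: eq_bigr => e eG; rewrite eG /F (subsetP sGE _ eG).
rewrite [RHS](bigID (mem E)) /= [X in _ = _ * X]big1 ?mulr1; last first.
  by move=> e /andP[/negbTE eG /negbTE eE]; rewrite eG /F' eE.
apply: eq_big => [e|e]; first by rewrite in_setD.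
by rewrite in_setD => /andP[/negbTE eG eE]; rewrite eG /F' eE.
Qed.

Variable theta : nat.
Local Notation sample := {ffun 'I_theta -> {set {set T}}}.
Local Notation Pr := (@sample_prob R T E p theta).

Lemma sample_prob_iid (P : pred {set {set T}}) :
  Pr (fun S => [forall i, P (S i)])
  = (\sum_(G in powerset E | P G) world_prob E p G) ^+ theta.
Proof.
rewrite -[in RHS](card_ord theta) -prodr_const bigA_distr_big.
apply: eq_bigl => S.
apply/andP/ffun_onP => [[/forallP sSE /forallP PS] i | onS].
  by rewrite unfold_in powersetE sSE PS.
split; apply/forallP => i.
all: by move: (onS i); rewrite unfold_in powersetE => /andP[].
Qed.

Lemma sample_prob_split (A : sample -> bool) :
  Pr A + Pr (fun S => ~~ A S) = 1.
Proof.
have total : Pr (fun _ => true) = 1.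
  have := sample_prob_iid predT.
  under eq_bigl do rewrite andbT.
  rewrite sum_world_prob expr1n => <-.
  by apply: eq_bigl => S; congr (_ && _); apply/esym/forallP.
rewrite -total /sample_prob [RHS](bigID A) /=.
by congr (_ + _); apply: eq_bigl => S; rewrite andbT.
Qed.

Lemma sample_prob_avoid (G : {set {set T}}) : G \in powerset E ->
  Pr (fun S => G \notin codom S) = (1 - world_prob E p G) ^+ theta.
Proof.
move=> GE; have := sample_prob_iid (predC1 G).
have <- : \sum_(H in powerset E | H != G) world_prob E p H
          = 1 - world_prob E p G.
  by rewrite -sum_world_prob [in RHS](bigD1 G) //= addrAC subrr add0r.
move <-; apply: eq_bigl => S; congr (_ && _).
apply/idP/forallP => [notS i | neqS].
  by apply: contraNneq notS => SiG; apply/codomP; exists i.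
by apply/codomP => -[i GSi]; move: (neqS i); rewrite /= -GSi eqxx.
Qed.

Lemma sample_weight_ge0 (S : sample) : [forall i, S i \subset E] ->
  0 <= \prod_(i < theta) world_prob E p (S i).
Proof.
by move=> /forallP sSE; apply: prodr_ge0 => i _; apply: world_prob_ge0.
Qed.

Lemma sample_probS (A B : sample -> bool) :
  (forall S, A S -> B S) -> Pr A <= Pr B.
Proof.
move=> sAB; rewrite /sample_prob [leRHS]big_mkcondr big_mkcondr /=.
apply: ler_sum => S sSE; case AS: (A S); first by rewrite sAB.
by case: (B S); rewrite ?sample_weight_ge0.
Qed.

Lemma sample_prob_union (I : finType) (J : {pred I})
    (A : sample -> bool) (B : I -> sample -> bool) :
  (forall S, A S -> exists2 j, j \in J & B j S) ->
  Pr A <= \sum_(j in J) Pr (B j).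
Proof.
move=> cover; rewrite /sample_prob.
pose w (S : sample) := \prod_(i < theta) world_prob E p (S i).
apply: (@le_trans _ _ (\sum_(S : sample | [forall i, S i \subset E])
                        \sum_(j in J) (B j S)%:R * w S)).
  rewrite big_mkcondr /=; apply: ler_sum => S sSE.
  have wB_ge0 j : 0 <= (B j S)%:R * w S by rewrite mulr_ge0 ?sample_weight_ge0.
  case: ifP => [/cover[j jJ BjS] | _]; last exact: sumr_ge0.
  by rewrite (bigD1 j) //= BjS mul1r lerDl sumr_ge0.
rewrite exchange_big /=; apply: ler_sum => j _.
rewrite big_mkcondr; apply: ler_sum => S _.
by case: (B j S); rewrite ?mul1r ?mul0r.
Qed.

End WorldProbability.

Section DensestContainment.
Variables (R : realFieldType) (T : finType).

Lemma in_densestS (G : {set {set T}}) (U V : {set T}) :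
  V \subset U -> in_densest R G U -> in_densest R G V.
Proof.
move=> sVU /existsP[W /andP[sUW dW]]; apply/existsP; exists W.
by rewrite (subset_trans sVU sUW) dW.
Qed.

Lemma closed_gamma_witness (E : {set {set T}}) (p : {set T} -> R)
    (V U : {set T}) :
  closed_wrt (gamma E p) V -> V \proper U ->
  exists2 G, G \in worlds_containing R E V & ~~ in_densest R G U.
Proof.
move=> /forallP/(_ U)/implyP closedV pVU; have /negP neq := closedV pVU.
case: (pickP [pred G in worlds_containing R E V | ~~ in_densest R G U]).
  by move=> G /andP[GV GU]; exists G.
move=> noG; case: neq; apply/eqP/eq_bigr => G GE.
suff -> : in_densest R G U = in_densest R G V by [].
apply/idP/idP => [|GV]; first exact/in_densestS/proper_sub.
by move: (noG G); rewrite /= inE GE GV => /negbFE.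
Qed.

Lemma gamma_hat_lt theta (S : {ffun 'I_theta -> {set {set T}}})
    (V U : {set T}) i :
  V \subset U -> in_densest R (S i) V -> ~~ in_densest R (S i) U ->
  gamma_hat R S U < gamma_hat R S V.
Proof.
move=> sVU SiV SiU; have theta_gt0 := leq_ltn_trans (leq0n i) (ltn_ord i).
rewrite /gamma_hat ltr_pM2r ?invr_gt0 ?ltr0n // ltr_nat.
apply/proper_card/properP; split; last by exists i; rewrite !inE ?SiV.
by apply/subsetP => j; rewrite !inE; apply: in_densestS.
Qed.

Lemma closed_gamma_hat (E : {set {set T}}) (p : {set T} -> R) theta
    (S : {ffun 'I_theta -> {set {set T}}}) (V : {set T}) :
  closed_wrt (gamma E p) V -> worlds_containing R E V \subset codom S ->
  closed_wrt (gamma_hat R S) V.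
Proof.
move=> closedV /subsetP sampled; apply/forallP => U; apply/implyP => pVU.
have [G GV GU] := closed_gamma_witness closedV pVU.
have /codomP[i GSi] := sampled G GV.
move: GV GU; rewrite inE GSi => /andP[_ SiV] SiU.
by rewrite (lt_eqF (gamma_hat_lt (proper_sub pVU) SiV SiU)).
Qed.

End DensestContainment.

(* Only the closedness of the V_i w.r.t. gamma is needed. *)
Theorem theorem4 (R : realFieldType) (T : finType)
    (E : {set {set T}}) (p : {set T} -> R)
    (hE : forall e, e \in E -> #|e| = 2%N)
    (hp : forall e, e \in E -> 0 < p e <= 1)
    (k lm theta : nat) (hk : (0 < k)%N) (hlm : (0 < lm)%N) (htheta : (0 < theta)%N)
    (Vs : 'I_k -> {set T})
    (hinj : injective Vs)
    (hclosed : forall i, closed_wrt (gamma E p) (Vs i))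
    (hsize : forall i, (lm <= #|Vs i|)%N)
    (hsorted : forall i j : 'I_k, (i <= j)%N -> gamma E p (Vs j) <= gamma E p (Vs i))
    (htop : forall U : {set T}, closed_wrt (gamma E p) U -> (lm <= #|U|)%N ->
              (forall i, U != Vs i) -> forall i, gamma E p U <= gamma E p (Vs i)) :
  1 - \sum_(G in \bigcup_(i < k) worlds_containing R E (Vs i))
        (1 - world_prob E p G) ^+ theta
  <= @sample_prob R T E p theta
       (fun S => [forall i : 'I_k, closed_wrt (@gamma_hat R T theta S) (Vs i)]).
Proof.
set GG := \bigcup_(i < k) _.
have hp01 e : e \in E -> 0 <= p e <= 1 by move/hp/andP=> [/ltW -> ->].
have GG_worlds G : G \in GG -> G \in powerset E.
  by case/bigcupP=> i _; rewrite inE => /andP[].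
pose covers (S : {ffun 'I_theta -> {set {set T}}}) := GG \subset codom S.
have covers_closed S : covers S ->
    [forall i : 'I_k, closed_wrt (gamma_hat R S) (Vs i)].
  move=> sampled; apply/forallP => i; apply: closed_gamma_hat (hclosed i) _.
  exact: subset_trans (bigcup_sup i isT) sampled.
apply: le_trans (sample_probS hp01 covers_closed).
rewrite lerBlDr -[leLHS](@sample_prob_split R T E p theta covers) lerD2l.
under eq_bigr => G /GG_worlds GE
  do rewrite -(@sample_prob_avoid R T E p theta G GE).
by apply: sample_prob_union => // S /subsetPn[G GGG notS]; exists G.
Qed.
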